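(* Let $V$ be an object of $\mathcal C$ and let $v\in V$ be a dominant vector of weight $i\in\{0,1,\dots,r-2\}$. Put $j=r-2-i$ and define the following vectors of $V$: - $h_{i-2k}=F^kv$ for $k=0,\dots,i$; - $R_{r-j}=Ev$ and $R_{r-j+2k}=E^kR_{r-j}$ for $k=0,\dots,j$; - $s_i=FR_{r-j}$ and $s_{i-2k}=F^ks_i$ for $k=0,\dots,i$; - $L_{j-r}=F^{i+1}v$ and $L_{j-r-2k}=F^kL_{j-r}$ for $k=0,\dots,j$. Then the linear span of these $2r$ vectors is a submodule of $V$. Moreover, the following relations hold whenever the involved vectors are defined: - $Hw_m=mw_m$ and $Kw_m=q^mw_m$ for $w\in\{h,s,R,L\}$; - $ER_m=R_{m+2}$, and $Fw_m=w_{m-2}$ for $w\in\{h,s,L\}$; - $Fh_{-i}=L_{j-r}$ and $EL_{j-r}=s_{-i}$; - $ER_{j+r}=Es_i=Fs_{-i}=FL_{-j-r}=0$; - $Eh_{i-2k}=\gamma_{i,k}h_{i-2k+2}+s_{i-2k+2}$ and $Es_{i-2k}=\gamma_{i,k}s_{i-2k+2}$; - $FR_{r-j+2k}=-\gamma_{j,k}R_{r-j+2k-2}$ and $EL_{j-2k-r}=-\gamma_{j,k}L_{j-2k-r+2}$. Here $\gamma_{n,k}=[k][n-k+1]$.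
   Context: Fix a positive integer $r$. Set $q=e^{\pi\sqrt{-1}/r}$, $q^x=e^{\pi\sqrt{-1}x/r}$, $\{x\}=q^x-q^{-x}$, $[x]=\{x\}/\{1\}$. $\overline U=\overline U_q^H\mathfrak{sl}(2)$ is the $\mathbb C$-algebra generated by $E,F,K,K^{-1},H$ with relations - $KK^{-1}=K^{-1}K=1$, $KEK^{-1}=q^2E$, $KFK^{-1}=q^{-2}F$, - $EF-FE=\frac{K-K^{-1}}{q-q^{-1}}$, - $HK=KH$, $[H,E]=2E$, $[H,F]=-2F$, - $E^r=F^r=0$. $\mathcal C$ is the category of finite-dimensional weight $\overline U$-modules: $H$ acts diagonalizably and $K$ acts by $q^\lambda$ on $H$-eigenvectors of eigenvalue (weight) $\lambda$. A weight vector $v$ is called dominant if $(FE)^2v=0$. *)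

From HB Require Import structures.
From mathcomp Require Import all_boot all_order all_algebra.
From mathcomp Require Import reals sequences exp trigo.
From mathcomp.real_closed Require Import complex.
Set Implicit Arguments. Unset Strict Implicit. Unset Printing Implicit Defensive.
Import Order.TTheory GRing.Theory Num.Theory.
Local Open Scope ring_scope.

Section Defs.
Variable (R : realType) (r : nat).
Local Notation C := (R[i]).

(* q^x = exp(pi sqrt(-1) x / r) for complex x = a + b sqrt(-1):
   exp((-pi b + sqrt(-1) pi a)/r) = e^{-pi b/r} (cos(pi a/r) + sqrt(-1) sin(pi a/r)) *)
Definition qpow (x : C) : C :=
  let a := complex.Re x in let b := complex.Im x in
  Complex (expR (- (pi * b) / r%:R) * cos (pi * a / r%:R))
          (expR (- (pi * b) / r%:R) * sin (pi * a / r%:R)).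

Definition q : C := qpow 1.

Definition qcurly (x : C) : C := qpow x - qpow (- x).
Definition qint (x : C) : C := qcurly x / qcurly 1.
Definition qgamma (n k : nat) : C :=
  qint k%:R * qint (n%:R - k%:R + 1).

(* V (a finite-dimensional C-vector space) with operators E F K K^{-1} H is a
   module over \overline U_q^H sl(2) lying in the category C (finite-dimensional
   weight module). *)
Definition is_Ubar_module (V : vectType C) (E F K Ki H : V -> V) : Prop :=
  ((forall x, K (Ki x) = x) /\ (forall x, Ki (K x) = x)) /\
  (forall x, K (E (Ki x)) = (q ^+ 2) *: E x) /\
  (forall x, K (F (Ki x)) = (q ^+ 2)^-1 *: F x) /\
  (forall x, E (F x) - F (E x) = (q - q^-1)^-1 *: (K x - Ki x)) /\
  (forall x, H (K x) = K (H x)) /\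
  (forall x, H (E x) - E (H x) = 2 *: E x) /\
  (forall x, H (F x) - F (H x) = - (2 *: F x)) /\
  ((forall x, iter r E x = 0) /\ (forall x, iter r F x = 0)).

Definition is_weight_module (V : vectType C) (K H : V -> V) : Prop :=
  (exists2 b : seq V, basis_of fullv b &
      forall w, w \in b -> exists lam : C, H w = lam *: w) /\
  (forall (lam : C) (w : V), w != 0 -> H w = lam *: w -> K w = qpow lam *: w).

Definition in_category_C (V : vectType C) (E F K Ki H : {linear V -> V}) : Prop :=
  is_Ubar_module E F K Ki H /\ is_weight_module K H.

Definition weight_vector (V : vectType C) (H : V -> V) (lam : C) (v : V) : Prop :=
  v != 0 /\ H v = lam *: v.

Definition dominant (V : vectType C) (E F : V -> V) (v : V) : Prop :=
  F (E (F (E v))) = 0.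

Definition is_submodule (V : vectType C) (E F K Ki H : V -> V) (U : {vspace V}) : Prop :=
  forall x, x \in U -> [/\ E x \in U, F x \in U, K x \in U, Ki x \in U & H x \in U].

End Defs.

(* The 2r vectors of Proposition 6.1, indexed by k:
   hv k = h_{i-2k} (k = 0..i),  Rv k = R_{r-j+2k} (k = 0..j),
   sv k = s_{i-2k} (k = 0..i),  Lv k = L_{j-r-2k} (k = 0..j). *)
Section Vectors.
Variables (R : realType) (V : vectType R[i]) (E F : V -> V) (i : nat) (v : V).
Definition hv (k : nat) : V := iter k F v.
Definition Rv (k : nat) : V := iter k E (E v).
Definition sv (k : nat) : V := iter k F (F (E v)).
Definition Lv (k : nat) : V := iter k F (iter i.+1 F v).
(* the list of the 2r vectors, with j = r - 2 - i *)
Definition prop61_vectors (j : nat) : seq V :=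
  [seq hv k | k <- iota 0 i.+1] ++ [seq Rv k | k <- iota 0 j.+1] ++
  [seq sv k | k <- iota 0 i.+1] ++ [seq Lv k | k <- iota 0 j.+1].
End Vectors.

From HB Require Import structures.
From mathcomp Require Import all_boot all_order all_algebra.
From mathcomp Require Import reals sequences exp trigo.
From mathcomp.real_closed Require Import complex.
From mathcomp Require Import ring lra zify.
Import Order.TTheory GRing.Theory Num.Theory.
Local Open Scope ring_scope.
Set Implicit Arguments. Unset Strict Implicit.

(* On a vector y of weight m the defining relations give
     F E^(k+1) y = E^(k+1) F y - [k+1][m+k] E^k y,
     E F^(k+1) y = F^(k+1) E y + [k+1][m-k] F^k y,
   and [n] vanishes for n = r but not for 0 < n < 2r, n <> r.  Let x = E F E v, of
   weight i+2; dominance says F x = 0.  Descending from E^(r-1) x = E^r (F E v) = 0,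
   the first formula kills E^k x for k > j (there r < i+2+k < 2r), then E^(j+1) E v;
   as [i+2+j] = [r] = 0 it also yields E^j x = 0, and descending further x = 0.
   Symmetrically F^(i+1) F E v = 0.  All stated relations are then instances of the
   two formulas, so E, F map the 2r weight vectors into their span. *)

Section QNumbers.
Variables (R : realType) (r : nat).
Local Notation C := R[i].
Local Notation qp := (@qpow R r).
Local Notation qi := (@qint R r).

Lemma qpowD (x y : C) : qp (x + y) = qp x * qp y.
Proof.
rewrite /qpow; move: (@pi R) => p; case: x => a b; case: y => c d /=.
rewrite !(mulrDr, mulrDl, opprD) expRD cosD sinD.
by apply/eqP; rewrite eq_complex /=; apply/andP; split; apply/eqP; ring.
Qed.

Lemma qpow0 : qp 0 = 1.
Proof. by rewrite /qpow /= !(mulr0, mul0r, oppr0, expR0, cos0, sin0, mul1r). Qed.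

Lemma qpow_neq0 (x : C) : qp x != 0.
Proof.
apply/negP => /eqP qx0; have := qpow0.
by rewrite -(addNr x) qpowD qx0 mulr0 => /eqP; rewrite eq_sym oner_eq0.
Qed.

Lemma qpowN (x : C) : qp (- x) = (qp x)^-1.
Proof. by apply: (mulIf (qpow_neq0 x)); rewrite -qpowD addNr qpow0 mulVf ?qpow_neq0. Qed.

Lemma qpow_real (a : R) :
  qp (Complex a 0) = Complex (cos (pi * a / r%:R)) (sin (pi * a / r%:R)).
Proof. by rewrite /qpow /= !(mulr0, mul0r, oppr0, expR0, mul1r). Qed.

Lemma natr_Complex (n : nat) : (n%:R : C) = Complex n%:R 0.
Proof. by rewrite -(rmorph_nat (real_complex R)). Qed.

Lemma qintN (x : C) : qi (- x) = - qi x.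
Proof. by rewrite /qint /qcurly opprK -mulNr opprB. Qed.

Lemma qint0 : qi 0 = 0.
Proof. by rewrite /qint /qcurly oppr0 subrr mul0r. Qed.

Hypothesis r_gt1 : (1 < r)%N.

Lemma qpow_r : qp r%:R = -1.
Proof.
have r_neq0 : r%:R != 0 :> R by rewrite pnatr_eq0 -lt0n ltnW.
by rewrite natr_Complex qpow_real mulfK // cospi sinpi -(rmorphN1 (real_complex R)).
Qed.

Lemma qcurly_nat_neq0 (n : nat) : (0 < n < r)%N -> qcurly r (n%:R : C) != 0.
Proof.
case/andP=> n_gt0 n_ltr; rewrite /qcurly.
have -> : - (n%:R : C) = Complex (- n%:R) 0.
  by rewrite natr_Complex; apply/eqP; rewrite eq_complex /= oppr0 !eqxx.
rewrite natr_Complex !qpow_real mulrN mulNr sinN.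
have : 0 < sin (pi * n%:R / r%:R :> R).
  have r_gt0 : (0 : R) < r%:R by rewrite ltr0n (ltn_trans n_gt0).
  apply: sin_gt0_pi; apply/andP; split.
    by rewrite divr_gt0 // mulr_gt0 ?pi_gt0 ?ltr0n.
  by rewrite ltr_pdivrMr // ltr_pM2l ?pi_gt0 // ltr_nat.
by move=> sin_gt0; apply/negP; rewrite eq_complex /= => /andP [_ /eqP]; lra.
Qed.

Lemma qcurly1_neq0 : qcurly r (1 : C) != 0.
Proof. by apply: (@qcurly_nat_neq0 1); rewrite r_gt1. Qed.

Lemma qint1 : qi 1 = 1.
Proof. by rewrite /qint divff // qcurly1_neq0. Qed.

Lemma qint_rB (x : C) : qi (r%:R - x) = qi x.
Proof.
rewrite /qint /qcurly opprB !qpowD !qpowN qpow_r invrN invr1.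
by congr (_ / _); have := qpow_neq0 x; move: (qp x) => a a_neq0; field.
Qed.

Lemma qint_r : qi r%:R = 0.
Proof. by rewrite -[r%:R]subr0 qint_rB qint0. Qed.

Lemma qint_nat_neq0 (n : nat) : (0 < n < r)%N -> qi n%:R != 0.
Proof. by move=> n_bounds; rewrite /qint mulf_neq0 ?invr_eq0 ?qcurly1_neq0 ?qcurly_nat_neq0. Qed.

Lemma qint_nat_neq0_gtr (n : nat) : (r < n < r + r)%N -> qi n%:R != 0.
Proof.
move=> n_bounds; have -> : (n%:R : C) = r%:R - (- (n - r)%N%:R).
  by rewrite natrB ?opprK; [ring | lia].
by rewrite qint_rB qintN oppr_eq0 qint_nat_neq0 //; lia.
Qed.

Lemma qint_recD (n m : C) :
  qi n * qi (m + n - 1) + qi (m + n + n) = qi (n + 1) * qi (m + n).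
Proof.
have q2_neq1 : qp 1 * qp 1 - 1 != 0.
  have -> : qp 1 * qp 1 - 1 = qp 1 * qcurly r 1.
    by rewrite /qcurly qpowN mulrBr divff ?qpow_neq0.
  by rewrite mulf_neq0 ?qpow_neq0 ?qcurly1_neq0.
rewrite /qint /qcurly !(qpowN, qpowD, opprD, opprK).
move: (qpow_neq0 m) (qpow_neq0 n) (qpow_neq0 1) q2_neq1.
move: (qp m) (qp n) (qp 1) => a b c a_neq0 b_neq0 c_neq0 c2_neq1.
by field; rewrite a_neq0 b_neq0 c_neq0 c2_neq1.
Qed.

Lemma qint_recB (n m : C) :
  qi n * qi (m - n + 1) + qi (m - n - n) = qi (n + 1) * qi (m - n).
Proof.
have := qint_recD n (- m).
have -> : - m + n - 1 = - (m - n + 1) by ring.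
have -> : - m + n + n = - (m - n - n) by ring.
have -> : - m + n = - (m - n) by ring.
by rewrite !qintN !mulrN -opprD => /oppr_inj.
Qed.

End QNumbers.

Lemma nat_down_ind (P : nat -> Prop) (m n : nat) : (m <= n)%N ->
  (forall k, (m <= k < n)%N -> P k.+1 -> P k) -> P n -> P m.
Proof.
move=> le_mn step; rewrite -(subnK le_mn).
have : (n - m + m <= n)%N by rewrite subnK.
elim: (n - m)%N => [//|d IHd] le_dn Pd.
by apply: IHd; [lia | apply: step; [lia | rewrite -addSn]].
Qed.

Lemma span_stable (K : fieldType) (vT : vectType K) (f : {linear vT -> vT}) (X : seq vT) :
  {in X, forall w, f w \in <<X>>%VS} -> forall x, x \in <<X>>%VS -> f x \in <<X>>%VS.
Proof.
move=> fX x xX; rewrite (@coord_span _ _ _ (in_tuple X) x xX) linear_sum.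
by apply: memv_suml => k _; rewrite linearZ memvZ // fX // mem_nth.
Qed.

Section UbarModule.
Variables (R : realType) (r : nat) (V : vectType R[i]) (E F K Ki H : {linear V -> V}).
Hypothesis hU : is_Ubar_module r E F K Ki H.
Local Notation C := R[i].
Local Notation qp := (@qpow R r).
Local Notation qi := (@qint R r).

Lemma KiK x : Ki (K x) = x.
Proof. by case: hU => [[_ KiK_] _]; apply: KiK_. Qed.

Lemma commEF x : E (F x) - F (E x) = (q R r - (q R r)^-1)^-1 *: (K x - Ki x).
Proof. by case: hU => _ [_ [_ [EF _]]]; apply: EF. Qed.

Lemma commHE x : H (E x) - E (H x) = 2 *: E x.
Proof. by case: hU => _ [_ [_ [_ [_ [HE _]]]]]; apply: HE. Qed.

Lemma commHF x : H (F x) - F (H x) = - (2 *: F x).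
Proof. by case: hU => _ [_ [_ [_ [_ [_ [HF _]]]]]]; apply: HF. Qed.

Lemma iterE_r x : iter r E x = 0.
Proof. by case: hU => _ [_ [_ [_ [_ [_ [_ [Er _]]]]]]]; apply: Er. Qed.

Lemma iterF_r x : iter r F x = 0.
Proof. by case: hU => _ [_ [_ [_ [_ [_ [_ [_ Fr]]]]]]]; apply: Fr. Qed.

Lemma iter_linear0 (f : {linear V -> V}) k : iter k f 0 = 0.
Proof. by elim: k => [|k IHk] //=; rewrite IHk linear0. Qed.

Definition has_weight (m : C) (y : V) := H y = m *: y.

Lemma has_weightE m y : has_weight m y -> has_weight (m + 2) (E y).
Proof.
rewrite /has_weight => Hy.
rewrite -[H (E y)](subrK (E (H y))) commHE Hy linearZ /=.
by rewrite [RHS]scalerDl addrC.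
Qed.

Lemma has_weightF m y : has_weight m y -> has_weight (m - 2) (F y).
Proof.
rewrite /has_weight => Hy.
rewrite -[H (F y)](subrK (F (H y))) commHF Hy [F (_ *: _)]linearZ /=.
by rewrite scalerBl addrC.
Qed.

Lemma has_weight_iterE m y k :
  has_weight m y -> has_weight (m + (2 * k)%:R) (iter k E y).
Proof.
move=> Hy; elim: k => [|k IHk]; first by rewrite addr0.
by rewrite iterS; have := has_weightE IHk; congr has_weight; rewrite mulnS natrD; ring.
Qed.

Lemma has_weight_iterF m y k :
  has_weight m y -> has_weight (m - (2 * k)%:R) (iter k F y).
Proof.
move=> Hy; elim: k => [|k IHk]; first by rewrite subr0.
by rewrite iterS; have := has_weightF IHk; congr has_weight; rewrite mulnS natrD; ring.
Qed.

Hypothesis hW : is_weight_module r K H.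

Lemma has_weightK m y : has_weight m y -> K y = qp m *: y.
Proof.
move=> Hy; have [->|y_neq0] := eqVneq y 0; first by rewrite linear0 scaler0.
by case: hW => _ KH; apply: KH.
Qed.

Lemma has_weightKi m y : has_weight m y -> Ki y = (qp m)^-1 *: y.
Proof.
move=> Hy; have := KiK y; rewrite (has_weightK Hy) linearZ => KiKy.
by rewrite -{2}KiKy scalerA mulVf ?scale1r // qpow_neq0.
Qed.

Lemma commEF_weight m y : has_weight m y -> E (F y) = F (E y) + qi m *: y.
Proof.
move=> Hy; rewrite -[E (F y)](subrK (F (E y))) commEF addrC.
rewrite (has_weightK Hy) (has_weightKi Hy) -scalerBl scalerA.
by rewrite /qint /qcurly /q !qpowN mulrC.
Qed.

Hypothesis r_gt1 : (1 < r)%N.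

Lemma F_iterE m y k : has_weight m y ->
  F (iter k.+1 E y) = iter k.+1 E (F y) - (qi k.+1%:R * qi (m + k%:R)) *: iter k E y.
Proof.
move=> Hy; elim: k => [|k IHk].
  by rewrite /= mulr1n qint1 // mul1r addr0 (commEF_weight Hy) addrK.
have Hz := has_weight_iterE k.+1 Hy.
rewrite iterS -[F (E _)](addrK (qi (m + (2 * k.+1)%:R) *: iter k.+1 E y)) -commEF_weight //.
rewrite IHk linearB linearZ -!iterS -addrA -opprD -scalerDl.
congr (_ - _ *: _); have := qint_recD r_gt1 k.+1%:R m.
by rewrite natr1 => <-; congr (_ * qi _ + qi _); ring.
Qed.

Lemma E_iterF m y k : has_weight m y ->
  E (iter k.+1 F y) = iter k.+1 F (E y) + (qi k.+1%:R * qi (m - k%:R)) *: iter k F y.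
Proof.
move=> Hy; elim: k => [|k IHk].
  by rewrite /= mulr1n qint1 // mul1r subr0 (commEF_weight Hy).
have Hz := has_weight_iterF k.+1 Hy.
rewrite iterS (commEF_weight Hz) IHk linearD linearZ -!iterS -addrA -scalerDl.
congr (_ + _ *: _); have := qint_recB r_gt1 k.+1%:R m.
by rewrite natr1 => <-; congr (_ * qi _ + qi _); ring.
Qed.

Lemma iterE_eq0_step m y k : has_weight m y -> qi k.+1%:R * qi (m + k%:R) != 0 ->
  iter k.+1 E (F y) = 0 -> iter k.+1 E y = 0 -> iter k E y = 0.
Proof.
move=> Hy c_neq0 EFy0 Ey0; have := F_iterE k Hy.
rewrite Ey0 EFy0 linear0 sub0r => /esym/eqP.
by rewrite oppr_eq0 scaler_eq0 (negbTE c_neq0) => /eqP.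
Qed.

Lemma iterF_eq0_step m y k : has_weight m y -> qi k.+1%:R * qi (m - k%:R) != 0 ->
  iter k.+1 F (E y) = 0 -> iter k.+1 F y = 0 -> iter k F y = 0.
Proof.
move=> Hy c_neq0 FEy0 Fy0; have := E_iterF k Hy.
rewrite Fy0 FEy0 linear0 add0r => /esym/eqP.
by rewrite scaler_eq0 (negbTE c_neq0) => /eqP.
Qed.

Section DominantVector.
Variables (i : nat) (v : V).
Hypotheses (i_le : (i.+2 <= r)%N) (v_wt : has_weight i%:R v) (v_dom : dominant E F v).
Let j := (r - 2 - i)%N.
Let r_eq : r = (i.+2 + j)%N. Proof. by rewrite /j -subnDA add2n subnKC. Qed.

Lemma has_weight_Ev : has_weight i.+2%:R (E v).
Proof. by have := has_weightE v_wt; congr has_weight; ring. Qed.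

Lemma has_weight_FEv : has_weight i%:R (F (E v)).
Proof. by have := has_weightF has_weight_Ev; congr has_weight; ring. Qed.

Lemma has_weight_EFEv : has_weight i.+2%:R (E (F (E v))).
Proof. by have := has_weightE has_weight_FEv; congr has_weight; ring. Qed.

Lemma iterE_EFEv_eq0 n : (j < n)%N -> iter n E (E (F (E v))) = 0.
Proof.
set x := E (F (E v)) => lt_jn; have x_wt := has_weight_EFEv.
suff xj : iter j.+1 E x = 0 by rewrite -(subnK lt_jn) iterD xj iter_linear0.
apply: (@nat_down_ind (fun k => iter k E x = 0) _ r.-1); first lia.
  move=> k k_bounds; apply: (iterE_eq0_step x_wt); last by rewrite [F x]v_dom iter_linear0.
  rewrite -natrD; apply: mulf_neq0; [apply: qint_nat_neq0 | apply: qint_nat_neq0_gtr];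
  by rewrite /j in k_bounds; lia.
by rewrite /x /= -iterSr prednK ?iterE_r //; lia.
Qed.

Lemma iterE_Ev_eq0 : iter j.+1 E (E v) = 0.
Proof.
apply: (@nat_down_ind (fun k => iter k E (E v) = 0) _ r.-1); first by rewrite /j; lia.
  move=> k k_bounds; apply: (iterE_eq0_step has_weight_Ev); last first.
    by rewrite iterSr iterE_EFEv_eq0 //; case/andP: k_bounds.
  rewrite -natrD; apply: mulf_neq0; [apply: qint_nat_neq0 | apply: qint_nat_neq0_gtr];
  by rewrite /j in k_bounds; lia.
by rewrite /= -iterSr prednK ?iterE_r //; lia.
Qed.

Lemma EFEv_eq0 : E (F (E v)) = 0.
Proof.
set x := E (F (E v)); have x_wt := has_weight_EFEv.
have xj : iter j E x = 0.
  have := F_iterE j has_weight_Ev; rewrite iterE_Ev_eq0 linear0 -natrD -r_eq qint_r //.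
  by rewrite mulr0 scale0r subr0 /= -iterSr => /esym.
apply: (@nat_down_ind (fun k => iter k E x = 0) 0 j) => // k k_bounds.
apply: (iterE_eq0_step x_wt); last by rewrite [F x]v_dom iter_linear0.
rewrite -natrD; apply: mulf_neq0; apply: qint_nat_neq0; rewrite /j in k_bounds; lia.
Qed.

Lemma iterF_FEv_eq0 : iter i.+1 F (F (E v)) = 0.
Proof.
apply: (@nat_down_ind (fun k => iter k F (F (E v)) = 0) _ r.-1); first lia.
  move=> k k_bounds; apply: (iterF_eq0_step has_weight_FEv); last first.
    by rewrite EFEv_eq0 iter_linear0.
  have -> : (i%:R - k%:R : C) = - (k - i)%N%:R by rewrite natrB ?opprB //; lia.
  by rewrite qintN mulrN oppr_eq0 mulf_neq0 // qint_nat_neq0 //; lia.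
by rewrite /= -iterSr prednK ?iterF_r //; lia.
Qed.

Lemma has_weight_hv k : has_weight (i%:R - (2 * k)%:R) (hv F v k).
Proof. exact: has_weight_iterF. Qed.

Lemma has_weight_sv k : has_weight (i%:R - (2 * k)%:R) (sv E F v k).
Proof. exact: has_weight_iterF has_weight_FEv. Qed.

Lemma has_weight_Rv k : has_weight ((r - j + 2 * k)%:R) (Rv E v k).
Proof. by rewrite {1}r_eq addnK natrD; apply: has_weight_iterE has_weight_Ev. Qed.

Lemma has_weight_Lv k : has_weight (j%:R - r%:R - (2 * k)%:R) (Lv F i v k).
Proof.
have := has_weight_iterF k (has_weight_iterF i.+1 v_wt).
by congr has_weight; rewrite r_eq; ring.
Qed.

Lemma E_hvS k : E (hv F v k.+1) = qgamma R r i k.+1 *: hv F v k + sv E F v k.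
Proof.
rewrite /hv /sv (E_iterF _ v_wt) iterSr addrC /qgamma.
by congr (_ *: _ + _); congr (_ * qi _); ring.
Qed.

Lemma E_svS k : E (sv E F v k.+1) = qgamma R r i k.+1 *: sv E F v k.
Proof.
rewrite /sv (E_iterF _ has_weight_FEv) EFEv_eq0 iter_linear0 add0r /qgamma.
by congr (_ *: _); congr (_ * qi _); ring.
Qed.

Lemma E_Lv0 : E (Lv F i v 0) = sv E F v i.
Proof.
rewrite [Lv _ _ _ _]/(hv F v i.+1) E_hvS /qgamma.
have -> : i%:R - i.+1%:R + 1 = 0 :> C by rewrite -natr1; ring.
by rewrite qint0 mulr0 scale0r add0r.
Qed.

Lemma qgamma_dual k : qgamma R r j k.+1 = qi k.+1%:R * qi (i.+2 + k)%:R.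
Proof.
by rewrite /qgamma -(qint_rB r_gt1 (i.+2 + k)%:R); congr (_ * qi _); rewrite r_eq; ring.
Qed.

Lemma F_RvS k : F (Rv E v k.+1) = - qgamma R r j k.+1 *: Rv E v k.
Proof.
rewrite /Rv (F_iterE _ has_weight_Ev) iterSr EFEv_eq0 iter_linear0 sub0r.
by rewrite qgamma_dual natrD scaleNr.
Qed.

Lemma E_LvS k : E (Lv F i v k.+1) = - qgamma R r j k.+1 *: Lv F i v k.
Proof.
rewrite /Lv -!iterD addSn (E_iterF _ v_wt) iterSr iterD iterF_FEv_eq0 iter_linear0 add0r.
rewrite qgamma_dual; congr (_ *: _).
have -> : (i%:R - (k + i.+1)%:R : C) = - k.+1%:R by rewrite natrD -natr1; ring.
by rewrite qintN mulrN mulrC; congr (- (_ * qi _%:R)); lia.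
Qed.

Lemma F_Lv_last : F (Lv F i v j) = 0.
Proof. by rewrite /Lv -iterS -iterD addSn -addnS addnC -r_eq iterF_r. Qed.

Let X := prop61_vectors E F i v j.

Lemma prop61_vectorsP w : w \in X ->
  [\/ exists2 k, (k <= i)%N & w = hv F v k, exists2 k, (k <= j)%N & w = Rv E v k,
      exists2 k, (k <= i)%N & w = sv E F v k | exists2 k, (k <= j)%N & w = Lv F i v k].
Proof.
rewrite /X /prop61_vectors !mem_cat.
by case/orP => [|/orP [|/orP []]] /mapP [k]; rewrite mem_iota add0n ltnS => le_k ->;
  [apply: Or41 | apply: Or42 | apply: Or43 | apply: Or44]; exists k.
Qed.

Lemma hv_in_span k : (k <= i)%N -> hv F v k \in <<X>>%VS.
Proof. by move=> le_ki; rewrite memv_span // !mem_cat map_f ?mem_iota. Qed.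

Lemma Rv_in_span k : (k <= j)%N -> Rv E v k \in <<X>>%VS.
Proof. by move=> le_kj; rewrite memv_span // !mem_cat map_f ?orbT ?mem_iota. Qed.

Lemma sv_in_span k : (k <= i)%N -> sv E F v k \in <<X>>%VS.
Proof. by move=> le_ki; rewrite memv_span // !mem_cat map_f ?orbT ?mem_iota. Qed.

Lemma Lv_in_span k : (k <= j)%N -> Lv F i v k \in <<X>>%VS.
Proof. by move=> le_kj; rewrite memv_span // !mem_cat map_f ?orbT ?mem_iota. Qed.

Lemma E_prop61_vectors w : w \in X -> E w \in <<X>>%VS.
Proof.
case/prop61_vectorsP => -[k le_k ->].
- case: k le_k => [|k] le_k; first by rewrite -[E _]/(Rv E v 0) Rv_in_span.
  by rewrite E_hvS memvD ?memvZ ?hv_in_span ?sv_in_span // ltnW.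
- case: (ltngtP k j) le_k => [lt_kj|//|->] _.
    by rewrite -[E _]/(Rv E v k.+1) Rv_in_span.
  by rewrite [E _]iterE_Ev_eq0 mem0v.
- case: k le_k => [|k] le_k; first by rewrite [E _]EFEv_eq0 mem0v.
  by rewrite E_svS memvZ ?sv_in_span // ltnW.
- case: k le_k => [|k] le_k; first by rewrite E_Lv0 sv_in_span.
  by rewrite E_LvS memvZ ?Lv_in_span // ltnW.
Qed.

Lemma F_prop61_vectors w : w \in X -> F w \in <<X>>%VS.
Proof.
case/prop61_vectorsP => -[k le_k ->].
- case: (ltngtP k i) le_k => [lt_ki|//|->] _.
    by rewrite -[F _]/(hv F v k.+1) hv_in_span.
  by rewrite -[F _]/(Lv F i v 0) Lv_in_span.
- case: k le_k => [|k] le_k; first by rewrite -[F _]/(sv E F v 0) sv_in_span.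
  by rewrite F_RvS memvZ ?Rv_in_span // ltnW.
- case: (ltngtP k i) le_k => [lt_ki|//|->] _.
    by rewrite -[F _]/(sv E F v k.+1) sv_in_span.
  by rewrite [F _]iterF_FEv_eq0 mem0v.
- case: (ltngtP k j) le_k => [lt_kj|//|->] _.
    by rewrite -[F _]/(Lv F i v k.+1) Lv_in_span.
  by rewrite F_Lv_last mem0v.
Qed.

Lemma prop61_vectors_weight w : w \in X -> exists m, has_weight m w.
Proof.
case/prop61_vectorsP => -[k _ ->]; eexists;
  [exact: has_weight_hv | exact: has_weight_Rv | exact: has_weight_sv | exact: has_weight_Lv].
Qed.

Lemma prop61_submodule : is_submodule E F K Ki H <<X>>%VS.
Proof.
move=> x xX; split; apply: span_stable xX => w wX.
- exact: E_prop61_vectors.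
- exact: F_prop61_vectors.
all: have [m w_wt] := prop61_vectors_weight wX.
- by rewrite (has_weightK w_wt) memvZ ?memv_span.
- by rewrite (has_weightKi w_wt) memvZ ?memv_span.
- by rewrite w_wt memvZ ?memv_span.
Qed.

End DominantVector.
End UbarModule.

Theorem proposition6p1 (R : realType) (r : nat) (V : vectType R[i])
    (E F K Ki H : {linear V -> V})
    (hV : in_category_C r E F K Ki H)
    (i : nat) (hi : (i.+2 <= r)%N) (v : V)
    (hv_wt : weight_vector H (i%:R : R[i]) v) (hv_dom : dominant E F v) :
  let j := (r - 2 - i)%N in
  let h := hv F v in
  let Rr := Rv E v in
  let s := sv E F v in
  let L := Lv F i v in
  let wh := fun k : nat => (i%:R - (2 * k)%:R : R[i]) in      (* weight of h_{i-2k}, s_{i-2k} *)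
  let wR := fun k : nat => ((r - j + 2 * k)%:R : R[i]) in     (* weight of R_{r-j+2k} *)
  let wL := fun k : nat => (j%:R - r%:R - (2 * k)%:R : R[i]) in (* weight of L_{j-r-2k} *)
  is_submodule E F K Ki H <<prop61_vectors E F i v j>>%VS /\
  (forall k, (k <= i)%N ->
     [/\ H (h k) = wh k *: h k, K (h k) = qpow r (wh k) *: h k,
         H (s k) = wh k *: s k & K (s k) = qpow r (wh k) *: s k]) /\
  (forall k, (k <= j)%N ->
     [/\ H (Rr k) = wR k *: Rr k, K (Rr k) = qpow r (wR k) *: Rr k,
         H (L k) = wL k *: L k & K (L k) = qpow r (wL k) *: L k]) /\
  (forall k, (k < j)%N -> E (Rr k) = Rr k.+1) /\
  (forall k, (k < i)%N -> F (h k) = h k.+1 /\ F (s k) = s k.+1) /\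
  (forall k, (k < j)%N -> F (L k) = L k.+1) /\
  F (h i) = L 0%N /\ E (L 0%N) = s i /\
  E (Rr j) = 0 /\ E (s 0%N) = 0 /\ F (s i) = 0 /\ F (L j) = 0 /\
  (forall k, (1 <= k <= i)%N ->
     E (h k) = qgamma R r i k *: h k.-1 + s k.-1 /\
     E (s k) = qgamma R r i k *: s k.-1) /\
  (forall k, (1 <= k <= j)%N ->
     F (Rr k) = - qgamma R r j k *: Rr k.-1 /\
     E (L k) = - qgamma R r j k *: L k.-1).
Proof.
move=> j h Rr s L wh wR wL; have [hU hW] := hV.
have r_gt1 : (1 < r)%N by apply: leq_trans hi.
have v_wt : has_weight H i%:R v := hv_wt.2.
split; first exact (prop61_submodule hU hW r_gt1 hi v_wt hv_dom).
split.
  move=> k _; have hk := has_weight_hv hU v_wt k; have sk := has_weight_sv hU v_wt k.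
  by split; [exact: hk | exact: has_weightK hk | exact: sk | exact: has_weightK sk].
split.
  move=> k _; have Rk := has_weight_Rv hU hi v_wt k; have Lk := has_weight_Lv hU hi v_wt k.
  by split; [exact: Rk | exact: has_weightK Rk | exact: Lk | exact: has_weightK Lk].
do 4 (split; first by move=> *; split).
split; first exact (E_Lv0 hU hW r_gt1 v_wt).
split; first exact (iterE_Ev_eq0 hU hW r_gt1 hi v_wt hv_dom).
split; first exact (EFEv_eq0 hU hW r_gt1 hi v_wt hv_dom).
split; first exact (iterF_FEv_eq0 hU hW r_gt1 hi v_wt hv_dom).
split; first exact (F_Lv_last hU v hi).
split=> -[//|k] _; split.
- exact (E_hvS hU hW r_gt1 v_wt k).
- exact (E_svS hU hW r_gt1 hi v_wt hv_dom k).
- exact (F_RvS hU hW r_gt1 hi v_wt hv_dom k).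
- exact (E_LvS hU hW r_gt1 hi v_wt hv_dom k).
Qed.
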